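(* In the setting described in the context, suppose that $$\sum_{x\in A}\alpha_x<\sum_{y\in N(A)}\beta_y\qquad\text{for all nonempty } A\subseteq\mathcal X,$$ where $N(A)=\bigcup_{x\in A}N_x$. Then the graph $\mathcal L$ is connected.
   Context: $\mathcal X$ is a finite set of units, $\mathcal G=(\mathcal X,\mathcal E)$ a directed graph, $N_x=\{y:(x,y)\in\mathcal E\}$, $\alpha_x,\beta_x$ non-negative integers. An allocation state is a matrix $W\in\mathbb N^{\mathcal X\times\mathcal X}$ with $W_{xy}=0$ whenever $(x,y)\notin\mathcal E$, $W^x:=\sum_yW_{xy}=\alpha_x$ for all $x$, and $W_y:=\sum_xW_{xy}\le\beta_y$ for all $y$; $\mathcal W$ is the set of allocation states and $e_{xy}$ the matrix unit. $\mathcal L$ is the graph on $\mathcal W$ in which $W$ and $W'$ are adjacent iff $W'=W-e_{xy}+e_{xy'}$ for some $x$ and some $y\ne y'$ with $W_{xy}>0$, $y'\in N_x$, $W_{y'}<\beta_{y'}$ (these are exactly the positive-rate transitions of the paper's noisy best-response storage dynamics restricted to $\mathcal W$, under its standing assumption that unit activation rates are $\nu_x=\nu\alpha_x$ with $\nu>0$). *)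

From mathcomp Require Import all_boot.
From Stdlib Require Import Relations.Relation_Operators.
Set Implicit Arguments. Unset Strict Implicit. Unset Printing Implicit Defensive.

Section Defs.
Variable X : finType.

Definition mx := {ffun X * X -> nat}.

Definition emat (x y : X) : mx := [ffun p => nat_of_bool (p == (x, y))].

Definition rowsum (W : mx) (x : X) : nat := \sum_(y : X) W (x, y).
Definition colsum (W : mx) (y : X) : nat := \sum_(x : X) W (x, y).

Definition nbhd (E : rel X) (A : {set X}) : {set X} :=
  [set y | [exists x in A, E x y]].

Definition alloc (E : rel X) (alpha beta : X -> nat) (W : mx) : Prop :=
  (forall x y, ~~ E x y -> W (x, y) = 0) /\
  (forall x, rowsum W x = alpha x) /\
  (forall y, colsum W y <= beta y).

Definition step (E : rel X) (beta : X -> nat) (W W' : mx) : Prop :=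
  exists x y y', y != y' /\ 0 < W (x, y) /\ E x y' /\ colsum W y' < beta y' /\
    W' = [ffun p => W p - emat x y p + emat x y' p].

Definition Ladj (E : rel X) (alpha beta : X -> nat) (W W' : mx) : Prop :=
  alloc E alpha beta W /\ alloc E alpha beta W' /\ step E beta W W'.

Definition L_connected (E : rel X) (alpha beta : X -> nat) : Prop :=
  forall W W', alloc E alpha beta W -> alloc E alpha beta W' ->
    clos_refl_trans mx (Ladj E alpha beta) W W'.

End Defs.

From mathcomp Require Import all_boot zify.
From Stdlib Require Import Relations.Relation_Operators.
Set Implicit Arguments. Unset Strict Implicit. Unset Printing Implicit Defensive.

(* Moves are reversible, so it suffices to bring any two states W and V together.
   We show that whenever W <> V, some moves applied to W and to V lower the surplus
   sum_p (W p - V p).  If the column sums differ, a column z fuller in V has a free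
   slot in W, into which a unit u can move from a column where W exceeds V.  If they
   agree, pick W (x, y0) < V (x, y0): Hall's condition yields a chain of columns
   y0 -> ... -> c -> h ending in a free slot, each link being a unit able to move
   along it.  Moving the unit of the last link into h either lowers the surplus (when
   W exceeds V at it) or can be done in both states at no cost, which frees c and
   shortens the chain. *)

Lemma sum_eq_exists_ltn (I : finType) (f g : I -> nat) i :
  \sum_j f j = \sum_j g j -> f i != g i -> exists j, f j < g j.
Proof.
move=> sum_fg fg_i; case: (boolP [exists j, f j < g j]) => [/existsP //|/existsPn g_le_f].
have gf_i : g i < f i by rewrite ltn_neqAle eq_sym fg_i leqNgt g_le_f.
suff : \sum_j g j < \sum_j f j by rewrite sum_fg ltnn.
rewrite (bigD1 i) // [X in _ < X](bigD1 i) //= -addSn leq_add //.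
by apply: leq_sum => j _; rewrite leqNgt g_le_f.
Qed.

Lemma leq_sum_subset (I : finType) (A B : {pred I}) (f : I -> nat) :
  {subset A <= B} -> \sum_(i in A) f i <= \sum_(i in B) f i.
Proof. exact: (sub_le_big leqnn (fun m n => leq_addr n m)). Qed.

Lemma sub_path_belast (T : eqType) (e e' : rel T) x s :
  {in belast x s, forall a b, e a b -> e' a b} -> path e x s -> path e' x s.
Proof.
elim: s x => //= y s IH x e_e' /andP[e_xy path_s].
rewrite e_e' ?mem_head //= IH // => a a_in; apply: e_e'.
by rewrite inE a_in orbT.
Qed.

#[local] Arguments rt_step {A R x y}.
#[local] Arguments rt_refl {A R x}.
#[local] Arguments rt_trans {A R x y z}.

Section Allocations.
Variables (X : finType) (E : rel X) (alpha beta : X -> nat).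

Local Notation state := (alloc E alpha beta).
Local Notation joined := (clos_refl_trans _ (Ladj E alpha beta)).

Definition move_unit (W : mx X) (u a b : X) : mx X :=
  [ffun p => W p - emat u a p + emat u b p].

Definition surplus (W V : mx X) : nat := \sum_p (W p - V p).

Definition move_rel (W : mx X) : rel X :=
  [rel a b | [exists u, (0 < W (u, a)) && E u b]].

Lemma ematE (u a : X) p : emat u a p = (p == (u, a)).
Proof. by rewrite ffunE. Qed.

Lemma move_unitD (W : mx X) u a b p : 0 < W (u, a) ->
  move_unit W u a b p + emat u a p = W p + emat u b p.
Proof. by move=> Wua; rewrite ffunE !ematE; case: eqVneq => [->|] /=; lia. Qed.

Lemma rowsum_emat (u b x : X) : rowsum (emat u b) x = (x == u).
Proof.
rewrite /rowsum (bigD1 b) //= big1 ?addn0 => [|y /negbTE y_b].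
  by rewrite ematE xpair_eqE eqxx andbT.
by rewrite ematE xpair_eqE y_b andbF.
Qed.

Lemma colsum_emat (u b y : X) : colsum (emat u b) y = (y == b).
Proof.
rewrite /colsum (bigD1 u) //= big1 ?addn0 => [|x /negbTE x_u].
  by rewrite ematE xpair_eqE eqxx.
by rewrite ematE xpair_eqE x_u.
Qed.

Lemma sum_ematM (u a : X) (f : X * X -> nat) :
  \sum_p emat u a p * f p = f (u, a).
Proof.
rewrite (bigD1 (u, a)) //= big1 ?addn0 => [|p /negbTE p_ua].
  by rewrite ematE eqxx mul1n.
by rewrite ematE p_ua mul0n.
Qed.

Lemma rowsum_move (W : mx X) u a b x : 0 < W (u, a) ->
  rowsum (move_unit W u a b) x = rowsum W x.
Proof.
move=> Wua; have := rowsum_emat u a x; have := rowsum_emat u b x.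
have : \sum_y (move_unit W u a b (x, y) + emat u a (x, y)) =
       \sum_y (W (x, y) + emat u b (x, y)) by apply: eq_bigr => y _; apply: move_unitD.
rewrite !big_split /= -!/(rowsum _ x); lia.
Qed.

Lemma colsum_move (W : mx X) u a b y : 0 < W (u, a) ->
  colsum (move_unit W u a b) y + (y == a) = colsum W y + (y == b).
Proof.
move=> Wua; rewrite -(colsum_emat u a) -(colsum_emat u b).
have : \sum_x (move_unit W u a b (x, y) + emat u a (x, y)) =
       \sum_x (W (x, y) + emat u b (x, y)) by apply: eq_bigr => x _; apply: move_unitD.
by rewrite !big_split.
Qed.

Lemma alloc_support (W : mx X) x y : state W -> 0 < W (x, y) -> E x y.
Proof. by move=> [W_supp _] Wxy; apply: contraTT Wxy => /W_supp ->. Qed.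

Lemma alloc_move (W : mx X) u a b :
  state W -> 0 < W (u, a) -> E u b -> colsum W b < beta b ->
  state (move_unit W u a b).
Proof.
move=> [W_supp [W_row W_col]] Wua Eub free_b; split; [|split].
- move=> x y Exy; rewrite ffunE !ematE W_supp //.
  case: (eqVneq (x, y) (u, b)) => [[ex ey]|_]; last lia.
  by rewrite ex ey Eub in Exy.
- by move=> x; rewrite rowsum_move.
- move=> y; have := colsum_move b y Wua; have := W_col y.
  by case: (eqVneq y b) => [->|] /=; lia.
Qed.

Lemma Ladj_move (W : mx X) u a b :
  state W -> 0 < W (u, a) -> E u b -> a != b -> colsum W b < beta b ->
  Ladj E alpha beta W (move_unit W u a b).
Proof.
move=> sW Wua Eub ab free_b; do 2 split => //; first exact: alloc_move.
by exists u, a, b.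
Qed.

Lemma move_unitK (W : mx X) u a b : 0 < W (u, a) -> a != b ->
  move_unit (move_unit W u a b) u b a = W.
Proof.
move=> Wua ab; apply/ffunP => p; rewrite !ffunE.
case: (eqVneq p (u, a)) => [->|]; last by rewrite /= subn0 addn0 addnK.
by rewrite xpair_eqE eqxx (negbTE ab) /= addn0 subn0 subnK.
Qed.

Lemma Ladj_sym (W W' : mx X) :
  Ladj E alpha beta W W' -> Ladj E alpha beta W' W.
Proof.
move=> [sW [sW' [u [a [b [ab [Wua [Eub [free_b W'E]]]]]]]]]; subst W'.
rewrite -/(move_unit W u a b) in sW' *.
rewrite -[X in Ladj _ _ _ _ X](move_unitK Wua ab).
have ba : b != a by rewrite eq_sym.
apply: (Ladj_move sW' _ (alloc_support sW Wua) ba).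
  by rewrite ffunE !ematE eqxx addn1.
have := colsum_move b a Wua; rewrite eqxx (negbTE ab) /=.
by have [_ [_ W_col]] := sW; have := W_col a; lia.
Qed.

Lemma joined_sym (W V : mx X) : joined W V -> joined V W.
Proof.
elim=> [? ? /Ladj_sym|?|? ? ? _ yx _ zy]; [exact: rt_step|exact: rt_refl|].
exact: rt_trans zy yx.
Qed.

Lemma rowsum_states (W V : mx X) x : state W -> state V -> rowsum W x = rowsum V x.
Proof. by move=> [_ [-> _]] [_ [-> _]]. Qed.

Lemma sum_colsum (W : mx X) : state W -> \sum_y colsum W y = \sum_x alpha x.
Proof.
by move=> [_ [W_row _]]; rewrite exchange_big; apply: eq_bigr => x _; apply: W_row.
Qed.

Lemma surplus_move (W V : mx X) u a b : 0 < W (u, a) -> a != b ->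
  surplus (move_unit W u a b) V + (V (u, a) < W (u, a)) =
  surplus W V + (V (u, b) <= W (u, b)).
Proof.
move=> Wua ab; rewrite -(sum_ematM u a (fun p => V p < W p)).
rewrite -(sum_ematM u b (fun p => V p <= W p)) -!big_split /=.
apply: eq_bigr => p _; have := move_unitD b p Wua; rewrite !ematE.
case: (eqVneq p (u, a)) => [->|_]; first by rewrite xpair_eqE eqxx (negbTE ab) /=; lia.
by case: eqVneq => /=; lia.
Qed.

Lemma surplus_move2 (W V : mx X) u a b : 0 < W (u, a) -> 0 < V (u, a) ->
  surplus (move_unit W u a b) (move_unit V u a b) = surplus W V.
Proof.
move=> Wua Vua; apply: eq_bigr => p _.
by have := move_unitD b p Wua; have := move_unitD b p Vua; lia.
Qed.

Lemma ltn_move2 (W V : mx X) u a b p : 0 < W (u, a) -> 0 < V (u, a) ->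
  (move_unit W u a b p < move_unit V u a b p) = (W p < V p).
Proof.
move=> Wua Vua; have := move_unitD b p Wua; have := move_unitD b p Vua.
by move=> ? ?; apply/idP/idP; lia.
Qed.

Definition approach (W V : mx X) : Prop :=
  exists W1 V1, [/\ state W1, state V1, joined W W1, joined V V1 &
                    surplus W1 V1 < surplus W V].

Lemma approach_left (W W1 V : mx X) :
  Ladj E alpha beta W W1 -> state V -> surplus W1 V < surplus W V ->
  approach W V.
Proof.
move=> adj sV lt_surplus; exists W1, V; split => //.
- by case: adj => _ [].
- exact: rt_step.
- exact: rt_refl.
Qed.

Lemma approach_left_trans (W W1 V : mx X) :
  Ladj E alpha beta W W1 -> surplus W1 V <= surplus W V -> approach W1 V ->
  approach W V.
Proof.
move=> adj le_surplus [W2 [V2 [sW2 sV2 W1W2 VV2 lt_surplus]]].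
exists W2, V2; split => //; first exact: rt_trans (rt_step adj) W1W2.
exact: leq_trans le_surplus.
Qed.

Lemma approach_both (W W1 V V1 : mx X) :
  Ladj E alpha beta W W1 -> Ladj E alpha beta V V1 ->
  surplus W1 V1 = surplus W V -> approach W1 V1 -> approach W V.
Proof.
move=> adjW adjV eq_surplus [W2 [V2 [sW2 sV2 W1W2 V1V2 lt_surplus]]].
exists W2, V2; split => //; rewrite -?eq_surplus //.
- exact: rt_trans (rt_step adjW) W1W2.
- exact: rt_trans (rt_step adjV) V1V2.
Qed.

Lemma approach_free_slot (W V : mx X) u z :
  state W -> state V -> W (u, z) < V (u, z) -> colsum W z < beta z ->
  approach W V.
Proof.
move=> sW sV Wuz free_z.
have [a Wua] : exists a, V (u, a) < W (u, a).
  apply: (sum_eq_exists_ltn (i := z)); first exact: rowsum_states.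
  by rewrite neq_ltn Wuz orbT.
have az : a != z by apply: contraTneq Wua => ->; rewrite -leqNgt ltnW.
have Wua_pos : 0 < W (u, a) by apply: leq_ltn_trans Wua.
have Euz : E u z by apply: (alloc_support sV); apply: leq_ltn_trans Wuz.
apply: (approach_left (Ladj_move sW Wua_pos Euz az free_z) sV).
by have := surplus_move V Wua_pos az; rewrite Wua leqNgt Wuz /=; lia.
Qed.

Lemma approach_colsum (W V : mx X) z :
  state W -> state V -> colsum W z < colsum V z -> approach W V.
Proof.
move=> sW sV lt_z; have [u Wuz] : exists u, W (u, z) < V (u, z).
  apply/existsP; apply: contraTT lt_z => /existsPn V_le_W.
  by rewrite -leqNgt; apply: leq_sum => u _; rewrite leqNgt V_le_W.
apply: approach_free_slot Wuz _ => //.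
by have [_ [_ V_col]] := sV; apply: leq_trans lt_z (V_col z).
Qed.

Lemma approach_path (W V : mx X) x y0 p :
  state W -> state V -> (forall z, colsum W z = colsum V z) ->
  W (x, y0) < V (x, y0) -> path (move_rel W) y0 p -> uniq (y0 :: p) ->
  colsum W (last y0 p) < beta (last y0 p) -> approach W V.
Proof.
elim/last_ind: p W V => [|p h IH] W V sW sV colWV Wxy0.
  by move=> _ _; exact: approach_free_slot Wxy0.
rewrite rcons_path last_rcons -rcons_cons rcons_uniq; set c := last y0 p.
move=> /andP[path_p /existsP[u /andP[Wuc Euh]]] /andP[h_notin uniq_p] free_h.
have ch : c != h by apply: contraNneq h_notin => <-; apply: mem_last.
have adjW := Ladj_move sW Wuc Euh ch free_h.
have sW' : state (move_unit W u c h) by case: adjW => _ [].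
have col_c := colsum_move h c Wuc; rewrite eqxx (negbTE ch) /= in col_c.
case: (ltnP (V (u, c)) (W (u, c))) => [Vuc|Wuc_le].
  apply: (approach_left_trans adjW).
    by have := surplus_move V Wuc ch; rewrite Vuc; lia.
  by apply: (approach_colsum (z := c)) => //; rewrite -colWV; lia.
have Vuc : 0 < V (u, c) by apply: leq_trans Wuc_le.
have free_hV : colsum V h < beta h by rewrite -colWV.
have adjV := Ladj_move sV Vuc Euh ch free_hV.
apply: (approach_both adjW adjV (surplus_move2 h Wuc Vuc)).
apply: (IH _ _ sW') => //.
- by case: adjV => _ [].
- move=> z; have := colsum_move h z Wuc; have := colsum_move h z Vuc; rewrite colWV; lia.
- by rewrite ltn_move2.
- apply: sub_path_belast path_p => a a_in b /existsP[v /andP[Wva Evb]].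
  have ac : a != c.
    by apply: contraTneq a_in => ->; move: uniq_p; rewrite lastI rcons_uniq => /andP[].
  apply/existsP; exists v; rewrite Evb andbT; have := move_unitD h (v, a) Wuc.
  by rewrite !ematE xpair_eqE (negbTE ac) andbF /=; lia.
- by have [_ [_ W_col]] := sW; have := W_col c; rewrite -/c; lia.
Qed.

Hypothesis hall : forall A : {set X}, A != set0 ->
  \sum_(x in A) alpha x < \sum_(y in nbhd E A) beta y.

Lemma reachable_free_slot (W : mx X) y0 : state W -> 0 < colsum W y0 ->
  exists2 h, connect (move_rel W) y0 h & colsum W h < beta h.
Proof.
move=> sW Wy0; set Q := [set z | connect (move_rel W) y0 z].
have [/exists_inP[h]|/exists_inPn Q_full] := boolP [exists h in Q, colsum W h < beta h].
  by rewrite inE; exists h.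
(* Otherwise the columns Q reachable from y0 are full, while the units A occupying
   them have N(A) within Q, so A violates Hall's condition. *)
exfalso; set A := [set u | [exists z in Q, 0 < W (u, z)]].
have A_nonempty : A != set0.
  have [u Wuy0] : exists u, 0 < W (u, y0).
    apply/existsP; apply: contraTT Wy0 => /existsPn W0.
    by rewrite -leqNgt leqn0 sum_nat_eq0; apply/forallP => u; rewrite -leqn0 leqNgt W0.
  by apply/set0Pn; exists u; rewrite inE; apply/exists_inP; exists y0; rewrite ?inE.
have NA_sub_Q : {subset nbhd E A <= Q}.
  move=> y; rewrite !inE => /exists_inP[u]; rewrite inE => /exists_inP[z].
  rewrite inE => y0z Wuz Euy; apply: connect_trans y0z (connect1 _).
  by apply/existsP; exists u; rewrite Wuz.
have occupied : \sum_(y in Q) colsum W y <= \sum_(u in A) alpha u.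
  have [_ [W_row _]] := sW.
  rewrite exchange_big (bigID [in A]) /= [X in _ + X]big1 ?addn0 => [|u u_notin].
    apply: leq_sum => u _; rewrite -W_row; exact: leq_sum_subset.
  apply: big1 => y y_in; apply/eqP; rewrite -leqn0 leqNgt; apply: contra u_notin => Wuy.
  by rewrite inE; apply/exists_inP; exists y.
have saturated : \sum_(y in Q) beta y <= \sum_(y in Q) colsum W y.
  by apply: leq_sum => y y_in; rewrite leqNgt Q_full.
have := hall A_nonempty; have := leq_sum_subset beta NA_sub_Q; lia.
Qed.

Lemma approach_neq (W V : mx X) : state W -> state V -> W != V -> approach W V.
Proof.
move=> sW sV WV.
case: (boolP [forall z, colsum W z == colsum V z]); last first.
  move=> /forallPn[z0 colWV_z0].
  have [z lt_z] : exists z, colsum W z < colsum V z.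
    by apply: (sum_eq_exists_ltn (i := z0)); rewrite // (sum_colsum sW) (sum_colsum sV).
  exact: approach_colsum lt_z.
move=> /forallP colWV; have {}colWV z : colsum W z = colsum V z by apply/eqP.
have [[x y] Wxy_ne] : exists p, W p != V p.
  by apply/existsP; apply: contra WV => /forallP WV; apply/eqP/ffunP => p; apply/eqP.
have [y0 Wxy0] : exists y0, W (x, y0) < V (x, y0).
  by apply: (sum_eq_exists_ltn (i := y)) => //; apply: rowsum_states.
have [h /connectP[p path_p ->] free_h] :
    exists2 h, connect (move_rel W) y0 h & colsum W h < beta h.
  by apply: reachable_free_slot; rewrite // colWV /colsum (bigD1 x) //=; lia.
case: (shortenP path_p) free_h => q path_q uniq_q _ free_h.
exact: approach_path Wxy0 path_q uniq_q free_h.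
Qed.

Lemma joined_states (W V : mx X) : state W -> state V -> joined W V.
Proof.
move: {-1}(surplus W V) (erefl (surplus W V)) => n.
elim/ltn_ind: n W V => n IH W V def_n sW sV.
have [<-|WV] := eqVneq W V; first exact: rt_refl.
have [W1 [V1 [sW1 sV1 WW1 VV1 lt_surplus]]] := approach_neq sW sV WV.
apply: rt_trans WW1 (rt_trans _ (joined_sym VV1)).
by apply: (IH (surplus W1 V1)) => //; rewrite -def_n.
Qed.

End Allocations.

Theorem proposition3 (X : finType) (E : rel X) (alpha beta : X -> nat) :
  (forall A : {set X}, A != set0 ->
     \sum_(x in A) alpha x < \sum_(y in nbhd E A) beta y) ->
  L_connected E alpha beta.
Proof. by move=> hall W V; apply: joined_states. Qed.
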